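(* Let $X$ be a Banach space, $T>0$, $p\in\{1,2\}$ the order of the BDF method used (BDF1 or BDF2), and $r\in\{1,\dots,p\}$. Let $f\in C^r([0,T];X)$ and $\widetilde f\in C([0,T];X)$ with $0=f(0)=f'(0)=\dots=f^{(r-1)}(0)=\widetilde f(0)$ (both extended by zero to negative times). Then for all $n$ with $t=t_n=n\Delta t\le T$, $$\big\|(\partial_t^{-1}f)(t)-[(\partial_t^{\Delta t})^{-1}\widetilde f]^n\big\|_X\le Ct\Big[(\Delta t)^r\max_{\tau\in[0,t]}\|f^{(r)}(\tau)\|_X+\max_{\tau\in[0,t]}\|f(\tau)-\widetilde f(\tau)\|_X\Big].$$
   Context: $\partial_t^{-1}f(t)=\int_0^tf(\xi)\,d\xi$. Convolution quadrature: BDF1 has $\delta(z)=1-z$, BDF2 has $\delta(z)=\frac32-2z+\frac12z^2$; the weights $w_j$ are defined by $\frac{\Delta t}{\delta(z)}=\sum_{j\ge0}w_jz^j$, and $[(\partial_t^{\Delta t})^{-1}\widetilde f]^n=\sum_{j=0}^nw_j\widetilde f(t_{n-j})$, $t_j=j\Delta t$. The constant $C$ is independent of $\Delta t$, $f$, $\widetilde f$ and $n$. *)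

From Stdlib Require Import Reals.
From Coquelicot Require Import Coquelicot.
Open Scope R_scope.

(* Coefficients delta_k of the BDF generating polynomial delta(z) = sum_k delta_k z^k.
   p = 1 : BDF1, delta(z) = 1 - z.
   p = 2 : BDF2, delta(z) = 3/2 - 2 z + 1/2 z^2. *)
Definition bdf_delta (p k : nat) : R :=
  match p, k with
  | 1%nat, 0%nat => 1
  | 1%nat, 1%nat => -1
  | 2%nat, 0%nat => 3/2
  | 2%nat, 1%nat => -2
  | 2%nat, 2%nat => 1/2
  | _, _ => 0
  end.

(* Convolution quadrature weights w_j, i.e. the power-series coefficients of
   dt / delta(z) = sum_j w_j z^j.  The formal reciprocal is computed by the
   Cauchy-product recursion  sum_{k=0}^{j} delta_k w_{j-k} = dt * [j = 0]
   (delta has degree <= 2 and delta_0 <> 0). *)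
Fixpoint cq_weight (p : nat) (dt : R) (j : nat) : R :=
  match j with
  | O => dt / bdf_delta p 0
  | S j' =>
      let w1 := cq_weight p dt j' in
      let w2 := match j' with O => 0 | S j'' => cq_weight p dt j'' end in
      - (bdf_delta p 1 * w1 + bdf_delta p 2 * w2) / bdf_delta p 0
  end.

Definition cq_inv {X : NormedModule R_AbsRing} (p : nat) (dt : R)
  (g : R -> X) (n : nat) : X :=
  sum_n (fun j => scal (cq_weight p dt j) (g (INR (n - j) * dt))) n.

Definition cont_within_0T {X : NormedModule R_AbsRing} (T : R) (g : R -> X) (t : R) : Prop :=
  filterlim g (within (fun s => 0 <= s <= T) (locally t)) (locally (g t)).

Definition deriv_within_0T {X : NormedModule R_AbsRing} (T : R) (g g' : R -> X) (t : R) : Prop :=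
  filterlim (fun h => scal (/ h) (minus (g (t + h)) (g t)))
    (within (fun h => h <> 0 /\ 0 <= t + h <= T) (locally 0)) (locally (g' t)).

Definition Cr_0T {X : NormedModule R_AbsRing} (T : R) (r : nat) (f : R -> X)
  (d : nat -> R -> X) : Prop :=
  (forall t, d 0%nat t = f t) /\
  (forall k, (k < r)%nat -> forall t, 0 <= t <= T -> deriv_within_0T T (d k) (d (S k)) t) /\
  (forall t, 0 <= t <= T -> cont_within_0T T (d r) t).

From Stdlib Require Import Reals Lra Lia List Classical FunctionalExtensionality.
From Coquelicot Require Import Coquelicot.
Open Scope R_scope.

(* The error splits into a consistency part, the convolution quadrature applied to the
   exact data [f], and a stability part, the quadrature applied to [f - ft].  The BDF1
   and BDF2 weights are [dt] and [dt (1 - 3^-(j+1))], all in [[0, dt]]; since [f - ft]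
   vanishes at [0], only [n] of them act, which bounds the stability part by
   [t max |f - ft|].  BDF1 is the right-rectangle rule, whose error per unit time is
   [O(dt)] for Lipschitz [f].  BDF2 differs from the composite trapezoidal rule by a
   sequence that is contracted by [1/3] at each step and driven by
   [dt/6 (f t_m - f t_(m+1))]; this term is [O(dt^2 |f'|)] per step and, when
   [f'(0) = 0], [O(dt^2 t |f''|)] in total, while the trapezoidal rule is [O(dt^2)] when
   [f'] is Lipschitz.  Bounds on derivatives become Lipschitz and Taylor bounds through a
   mean value inequality for vector-valued functions, proved by real induction. *)

Section LinearExpressions.
Context {V : ModuleSpace R_Ring}.

Inductive lin_expr : Type :=
| LVar : nat -> lin_expr
| LZero : lin_expr
| LPlus : lin_expr -> lin_expr -> lin_expr
| LOpp : lin_expr -> lin_expr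
| LMinus : lin_expr -> lin_expr -> lin_expr
| LScal : R -> lin_expr -> lin_expr.

Fixpoint lin_eval (env : list V) (e : lin_expr) : V :=
  match e with
  | LVar i => nth i env zero
  | LZero => zero
  | LPlus a b => plus (lin_eval env a) (lin_eval env b)
  | LOpp a => opp (lin_eval env a)
  | LMinus a b => minus (lin_eval env a) (lin_eval env b)
  | LScal r a => scal r (lin_eval env a)
  end.

Fixpoint lin_coef (e : lin_expr) (i : nat) : R :=
  match e with
  | LVar j => if Nat.eqb i j then 1 else 0
  | LZero => 0
  | LPlus a b => lin_coef a i + lin_coef b i
  | LOpp a => - lin_coef a i
  | LMinus a b => lin_coef a i - lin_coef b i
  | LScal r a => r * lin_coef a i
  end.

Fixpoint lin_comb (env : list V) (c : nat -> R) : V :=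
  match env with
  | nil => zero
  | x :: l => plus (scal (c O) x) (lin_comb l (fun i => c (S i)))
  end.

Lemma lin_comb_ext env c1 c2 :
  (forall i, (i < length env)%nat -> c1 i = c2 i) -> lin_comb env c1 = lin_comb env c2.
Proof.
  revert c1 c2; induction env as [|x l IH]; intros c1 c2 H; simpl; auto.
  rewrite (H O) by (simpl; lia). f_equal. apply IH. intros i Hi. apply H. simpl; lia.
Qed.

Lemma lin_comb_plus env c1 c2 :
  lin_comb env (fun i => c1 i + c2 i) = plus (lin_comb env c1) (lin_comb env c2).
Proof.
  revert c1 c2; induction env as [|x l IH]; intros c1 c2; simpl.
  - now rewrite plus_zero_r.
  - rewrite IH, (scal_distr_r (c1 O) (c2 O) x : scal (c1 O + c2 O) x = _), <- !plus_assoc.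
    f_equal.
    rewrite !plus_assoc. f_equal. apply plus_comm.
Qed.

Lemma lin_comb_scal env r c : lin_comb env (fun i => r * c i) = scal r (lin_comb env c).
Proof.
  revert c; induction env as [|x l IH]; intros c; simpl.
  - now rewrite scal_zero_r.
  - rewrite IH, <- (scal_assoc r (c O) x : scal r (scal (c O) x) = scal (r * c O) x).
    now rewrite scal_distr_l.
Qed.

Lemma lin_comb_zero env : lin_comb env (fun _ => 0) = zero.
Proof.
  induction env as [|x l IH]; simpl; auto.
  rewrite IH, (scal_zero_l x : scal 0 x = zero). apply plus_zero_r.
Qed.

Lemma lin_comb_var env j : lin_comb env (fun i => if Nat.eqb i j then 1 else 0) = nth j env zero.
Proof.
  revert j; induction env as [|x l IH]; intros [|j]; simpl; auto.
  - rewrite (scal_one x : scal 1 x = x), lin_comb_zero. apply plus_zero_r.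
  - rewrite (scal_zero_l x : scal 0 x = zero), plus_zero_l. apply IH.
Qed.

Lemma lin_eval_comb env e : lin_eval env e = lin_comb env (lin_coef e).
Proof.
  induction e as [j| |e1 IH1 e2 IH2|e IH|e1 IH1 e2 IH2|r e IH]; simpl.
  - now rewrite lin_comb_var.
  - now rewrite lin_comb_zero.
  - now rewrite lin_comb_plus, IH1, IH2.
  - rewrite (lin_comb_ext _ _ (fun i => - (1) * lin_coef e i)) by (intros; ring).
    now rewrite lin_comb_scal, IH, (scal_opp_one _ : scal (- (1)) _ = _).
  - rewrite (lin_comb_ext _ _ (fun i => lin_coef e1 i + - (1) * lin_coef e2 i)) by (intros; ring).
    now rewrite lin_comb_plus, lin_comb_scal, IH1, IH2, (scal_opp_one _ : scal (- (1)) _ = _).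
  - now rewrite lin_comb_scal, IH.
Qed.

Lemma lin_eval_eq env e1 e2 :
  (forall i, (i < length env)%nat -> lin_coef e1 i = lin_coef e2 i) ->
  lin_eval env e1 = lin_eval env e2.
Proof. intros H. rewrite !lin_eval_comb. now apply lin_comb_ext. Qed.

End LinearExpressions.

Ltac lin_mem x l :=
  match l with
  | cons ?y _ => unify x y
  | cons _ ?l' => lin_mem x l'
  end.

Ltac lin_add x l :=
  match True with
  | _ => let _ := match goal with _ => lin_mem x l end in l
  | _ => constr:(cons x l)
  end.

Ltac lin_atoms t l :=
  match t with
  | zero => l
  | plus ?a ?b => let l1 := lin_atoms a l in lin_atoms b l1
  | minus ?a ?b => let l1 := lin_atoms a l in lin_atoms b l1
  | opp ?a => lin_atoms a l
  | scal _ ?a => lin_atoms a l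
  | _ => lin_add t l
  end.

Ltac lin_index x l :=
  match l with
  | cons ?y _ => let _ := match goal with _ => unify x y end in constr:(O)
  | cons _ ?l' => let n := lin_index x l' in constr:(S n)
  end.

Ltac lin_reify t l :=
  match t with
  | zero => constr:(LZero)
  | plus ?a ?b => let ea := lin_reify a l in let eb := lin_reify b l in constr:(LPlus ea eb)
  | minus ?a ?b => let ea := lin_reify a l in let eb := lin_reify b l in constr:(LMinus ea eb)
  | opp ?a => let ea := lin_reify a l in constr:(LOpp ea)
  | scal ?r ?a => let ea := lin_reify a l in constr:(LScal r ea)
  | _ => let i := lin_index t l in constr:(LVar i)
  end.

(* Proves an equation between linear combinations (over [R]) of opaque vectors by
   comparing coefficients; the coefficient goals go to [field]. *)
Ltac module_eq :=
  repeat match goal with H := _ |- _ => progress unfold H end;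
  match goal with
  | |- @eq ?V ?lhs ?rhs =>
    let l0 := lin_atoms lhs (@nil V) in
    let l := lin_atoms rhs l0 in
    let e1 := lin_reify lhs l in
    let e2 := lin_reify rhs l in
    change (lin_eval l e1 = lin_eval l e2);
    apply lin_eval_eq;
    let i := fresh "i" in let Hi := fresh "Hi" in
    intros i Hi; simpl in Hi;
    repeat (destruct i as [|i]; [simpl; try ring; try (field; auto) | try (exfalso; lia)])
  end.

Ltac norm_as t := apply Rle_trans with (norm t); [right; f_equal; module_eq |].

Lemma real_induction (P : R -> Prop) a b : a <= b ->
  (forall s, a <= s <= b -> (forall y, a <= y < s -> P y) -> P s) ->
  (forall s, a <= s < b -> P s ->
     exists del, 0 < del /\ forall y, s < y < s + del -> y <= b -> P y) ->
  forall y, a <= y <= b -> P y.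
Proof.
  intros Hab Hclosed Hopen.
  set (E := fun x => a <= x <= b /\ forall y, a <= y <= x -> P y).
  assert (HEa : E a).
  { split; [lra|]. intros y Hy. replace y with a by lra.
    apply Hclosed; [lra|]. intros; lra. }
  destruct (completeness E) as [s [Hub Hlub]].
  { exists b. intros x [Hx _]. lra. }
  { now exists a. }
  assert (Has : a <= s) by now apply Hub.
  assert (Hsb : s <= b) by (apply Hlub; intros x [Hx _]; lra).
  assert (Hbelow : forall y, a <= y < s -> P y).
  { intros y Hy. destruct (classic (is_upper_bound E y)) as [Hy_ub|Hy_ub].
    - specialize (Hlub y Hy_ub). lra.
    - apply not_all_ex_not in Hy_ub as [x Hx].
      apply imply_to_and in Hx as [[_ Hx] Hxy]. apply Hx. lra. }
  assert (Hs : P s) by (apply Hclosed; lra || assumption).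
  assert (Hsb' : s = b).
  { destruct (Req_dec s b) as [|Hne]; [assumption|].
    destruct (Hopen s ltac:(lra) Hs) as [del [Hdel Hnext]].
    set (x := Rmin b (s + del / 2)).
    assert (Hx : s < x <= b) by (unfold x; split; [apply Rmin_glb_lt|apply Rmin_l]; lra).
    assert (Ex : E x).
    { split; [lra|]. intros y Hy.
      destruct (Rlt_le_dec y s); [apply Hbelow; lra|].
      destruct (Req_dec y s) as [->|]; [exact Hs|].
      assert (x <= s + del / 2) by apply Rmin_r. apply Hnext; lra. }
    specialize (Hub x Ex). lra. }
  subst s. intros y Hy. destruct (Req_dec y b) as [->|]; [exact Hs|]. apply Hbelow; lra.
Qed.

Section MeanValue.
Context {X : NormedModule R_AbsRing}.

(* Restated at a fixed [X]: [apply norm_triangle] and [apply norm_scal] fail to unify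
   the canonical structure instances in the goals below. *)
Lemma norm_plus_le (x y : X) : norm (plus x y) <= norm x + norm y.
Proof. exact (norm_triangle x y). Qed.

Lemma norm_scal_le (l : R) (x : X) : norm (scal l x) <= Rabs l * norm x.
Proof. exact (norm_scal l x). Qed.

Lemma norm_le_of_eq_zero (x : X) c : x = zero -> 0 <= c -> norm x <= c.
Proof. intros -> Hc. now rewrite norm_zero. Qed.

Lemma norm_scal_nonneg (l : R) (x : X) : 0 <= l -> norm (scal l x) <= l * norm x.
Proof. intros Hl. rewrite <- (Rabs_pos_eq l Hl) at 2. apply norm_scal_le. Qed.

Lemma deriv_within_0T_linear_approx T (g g' : R -> X) s (v : X) K eps :
  0 < eps -> deriv_within_0T T g g' s -> norm (minus (g' s) v) <= K ->
  exists del, 0 < del /\ forall y, 0 <= y <= T -> Rabs (y - s) < del ->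
    norm (minus (minus (g y) (g s)) (scal (y - s) v)) <= (K + eps) * Rabs (y - s).
Proof.
  intros Heps Hd HK.
  apply (filterlim_locally_ball_norm _ _) with (eps := mkposreal eps Heps) in Hd.
  destruct Hd as [[del Hdel] Hball]. exists del; split; [exact Hdel|].
  intros y Hy Hys.
  destruct (Req_dec y s) as [->|Hne].
  { apply norm_le_of_eq_zero; [module_eq|rewrite Rminus_diag, Rabs_R0; lra]. }
  assert (Hq : norm (minus (scal (/ (y - s)) (minus (g (s + (y - s))) (g s))) (g' s)) < eps).
  { apply (Hball (y - s)).
    { change (Rabs (y - s + - 0) < del). now rewrite Ropp_0, Rplus_0_r. }
    split; [lra|]. now replace (s + (y - s)) with y by ring. }
  replace (s + (y - s)) with y in Hq by ring.
  assert (Hys0 : y - s <> 0) by lra.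
  norm_as (plus (scal (y - s) (minus (scal (/ (y - s)) (minus (g y) (g s))) (g' s)))
                (scal (y - s) (minus (g' s) v))).
  eapply Rle_trans; [apply norm_plus_le|].
  eapply Rle_trans; [apply Rplus_le_compat; apply norm_scal_le|].
  assert (0 <= Rabs (y - s)) by apply Rabs_pos. nra.
Qed.

Lemma mean_value_ineq_eps T (g g' : R -> X) a b (v : X) K eps :
  0 < eps -> 0 <= a -> a <= b -> b <= T ->
  (forall u, a <= u <= b -> deriv_within_0T T g g' u) ->
  (forall u, a <= u <= b -> norm (minus (g' u) v) <= K) ->
  norm (minus (minus (g b) (g a)) (scal (b - a) v)) <= (K + eps) * (b - a).
Proof.
  intros Heps Ha Hab HbT Hd HK.
  set (defect := fun y => minus (minus (g y) (g a)) (scal (y - a) v)).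
  assert (Hsplit : forall y s, defect y =
    plus (defect s) (minus (minus (g y) (g s)) (scal (y - s) v))).
  { intros y s. module_eq. }
  apply (real_induction (fun y => norm (defect y) <= (K + eps) * (y - a)) a b); try lra.
  - intros s Hs Hbelow.
    destruct (Req_dec s a) as [->|Hsa].
    { apply norm_le_of_eq_zero; [module_eq|lra]. }
    destruct (deriv_within_0T_linear_approx T g g' s v K eps Heps (Hd s Hs) (HK s Hs))
      as [del [Hdel Hloc]].
    set (y := Rmax a (s - del / 2)).
    assert (Hy : a <= y < s /\ s - del / 2 <= y)
      by (unfold y; repeat split; [apply Rmax_l|apply Rmax_lub_lt; lra|apply Rmax_r]).
    assert (Hstep : norm (minus (minus (g s) (g y)) (scal (s - y) v)) <= (K + eps) * (s - y)).
    { norm_as (opp (minus (minus (g y) (g s)) (scal (y - s) v))). rewrite norm_opp.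
      replace (s - y) with (Rabs (y - s)) by (rewrite Rabs_left; lra).
      apply Hloc; [lra|]. rewrite Rabs_left; lra. }
    rewrite (Hsplit s y).
    eapply Rle_trans; [apply norm_plus_le|].
    assert (Hy_a := Hbelow y ltac:(lra)). lra.
  - intros s Hs Hs_a.
    destruct (deriv_within_0T_linear_approx T g g' s v K eps Heps (Hd s ltac:(lra)) (HK s ltac:(lra)))
      as [del [Hdel Hloc]].
    exists del; split; [exact Hdel|]. intros y Hy Hyb.
    rewrite (Hsplit y s).
    eapply Rle_trans; [apply norm_plus_le|].
    assert (Hy_s := Hloc y ltac:(lra) ltac:(rewrite Rabs_right; lra)).
    rewrite Rabs_right in Hy_s by lra. lra.
Qed.

Lemma mean_value_ineq T (g g' : R -> X) a b (v : X) K :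
  0 <= a -> a <= b -> b <= T ->
  (forall u, a <= u <= b -> deriv_within_0T T g g' u) ->
  (forall u, a <= u <= b -> norm (minus (g' u) v) <= K) ->
  norm (minus (minus (g b) (g a)) (scal (b - a) v)) <= K * (b - a).
Proof.
  intros Ha Hab HbT Hd HK. apply le_epsilon. intros eps Heps.
  assert (Heps' : 0 < eps / (b - a + 1)) by (apply Rdiv_lt_0_compat; lra).
  eapply Rle_trans; [exact (mean_value_ineq_eps T g g' a b v K _ Heps' Ha Hab HbT Hd HK)|].
  assert (eps / (b - a + 1) * (b - a + 1) = eps) by (field; lra).
  nra.
Qed.
End MeanValue.

Definition lipschitz_on {X : NormedModule R_AbsRing} (a b L : R) (g : R -> X) : Prop :=
  forall u w, a <= u <= b -> a <= w <= b -> norm (minus (g u) (g w)) <= L * Rabs (u - w).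

Section Lipschitz.
Context {X : NormedModule R_AbsRing}.

Lemma lipschitz_on_sub a b a' b' L (g : R -> X) :
  a <= a' -> b' <= b -> lipschitz_on a b L g -> lipschitz_on a' b' L g.
Proof. intros Ha Hb Hg u w Hu Hw. apply Hg; lra. Qed.

Lemma lipschitz_on_of_deriv_bound T (g g' : R -> X) a b K :
  0 <= a -> b <= T ->
  (forall u, a <= u <= b -> deriv_within_0T T g g' u) ->
  (forall u, a <= u <= b -> norm (g' u) <= K) ->
  lipschitz_on a b K g.
Proof.
  intros Ha HbT Hd HK.
  assert (HK0 : forall u, a <= u <= b -> norm (minus (g' u) zero) <= K)
    by (intros u Hu; rewrite minus_zero_r; now apply HK).
  assert (Hmono : forall u w, a <= w <= u -> u <= b ->
            norm (minus (g u) (g w)) <= K * (u - w)).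
  { intros u w Hwu Hub.
    assert (Hm := mean_value_ineq T g g' w u zero K ltac:(lra) ltac:(lra) ltac:(lra)
                    ltac:(intros; apply Hd; lra) ltac:(intros; apply HK0; lra)).
    eapply Rle_trans; [|exact Hm]. right. f_equal. module_eq. }
  intros u w Hu Hw. destruct (Rle_lt_dec w u).
  - rewrite Rabs_pos_eq by lra. apply Hmono; lra.
  - rewrite Rabs_left, <- norm_opp by lra.
    norm_as (minus (g w) (g u)). replace (- (u - w)) with (w - u) by ring. apply Hmono; lra.
Qed.

Lemma taylor1_remainder T (g g' : R -> X) a b M :
  0 <= a -> b <= T -> 0 <= M ->
  (forall u, a <= u <= b -> deriv_within_0T T g g' u) ->
  lipschitz_on a b M g' ->
  forall c s, a <= c <= b -> a <= s <= b ->
    norm (minus (minus (g s) (g c)) (scal (s - c) (g' c))) <= M * (s - c) ^ 2.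
Proof.
  intros Ha HbT HM Hd Hg' c s Hc Hs.
  assert (Hslope : forall u, a <= u <= b -> Rabs (u - c) <= Rabs (s - c) ->
            norm (minus (g' u) (g' c)) <= M * Rabs (s - c)).
  { intros u Hu Huc. eapply Rle_trans; [apply Hg'; assumption|].
    apply Rmult_le_compat_l; assumption. }
  rewrite <- pow2_abs. replace (M * Rabs (s - c) ^ 2) with (M * Rabs (s - c) * Rabs (s - c)) by ring.
  destruct (Rle_lt_dec c s).
  - rewrite (Rabs_pos_eq (s - c)) at 2 by lra.
    apply (mean_value_ineq T g g'); try lra.
    + intros u Hu. apply Hd. lra.
    + intros u Hu. apply Hslope; [lra|]. unfold Rabs; repeat destruct Rcase_abs; lra.
  - rewrite (Rabs_left (s - c)) at 2 by lra. rewrite <- norm_opp.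
    norm_as (minus (minus (g c) (g s)) (scal (c - s) (g' c))).
    replace (- (s - c)) with (c - s) by ring.
    apply (mean_value_ineq T g g'); try lra.
    + intros u Hu. apply Hd. lra.
    + intros u Hu. apply Hslope; [lra|]. unfold Rabs; repeat destruct Rcase_abs; lra.
Qed.

Lemma continuous_of_lipschitz (g : R -> X) L :
  (forall x y, norm (minus (g x) (g y)) <= L * Rabs (x - y)) -> forall x, continuous g x.
Proof.
  intros Hg x. apply (filterlim_locally_ball_norm g (g x)). intros [eps Heps].
  assert (Hdel : 0 < eps / (Rabs L + 1))
    by (apply Rdiv_lt_0_compat; [lra|]; assert (0 <= Rabs L) by apply Rabs_pos; lra).
  exists (mkposreal _ Hdel). intros y Hy.
  change (Rabs (y + - x) < eps / (Rabs L + 1)) in Hy.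
  change (norm (minus (g y) (g x)) < eps).
  assert (0 <= Rabs L) by apply Rabs_pos.
  assert (Rabs (y - x) * (Rabs L + 1) < eps)
    by (apply (Rmult_lt_compat_r (Rabs L + 1)) in Hy; [|lra];
        unfold Rminus; field_simplify in Hy; lra).
  assert (L <= Rabs L) by apply RRle_abs.
  assert (0 <= Rabs (y - x)) by apply Rabs_pos.
  eapply Rle_lt_trans; [apply Hg|]. nra.
Qed.
End Lipschitz.

Section Quadrature.
Context {X : CompleteNormedModule R_AbsRing}.

Lemma ex_RInt_lipschitz_on a b L (g : R -> X) :
  a <= b -> lipschitz_on a b L g -> ex_RInt g a b.
Proof.
  intros Hab Hg.
  (* [ex_RInt_continuous] needs two-sided continuity at [a] and [b], so integrate the
     clamped extension of [g] instead, which is Lipschitz on all of [R]. *)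
  set (clamp := fun x => Rmax a (Rmin b x)).
  assert (Hclamp_in : forall x, a <= clamp x <= b)
    by (intros x; unfold clamp, Rmax, Rmin; repeat destruct Rle_dec; lra).
  apply (ex_RInt_ext (fun x => g (clamp x))).
  { intros x Hx. rewrite Rmin_left, Rmax_right in Hx by lra.
    unfold clamp. now rewrite Rmin_right, Rmax_right by lra. }
  apply ex_RInt_continuous. intros z _.
  apply (continuous_of_lipschitz (X := X) _ (Rabs L)). intros x y.
  eapply Rle_trans; [apply Hg; apply Hclamp_in|].
  assert (L <= Rabs L) by apply RRle_abs.
  assert (0 <= Rabs (clamp x - clamp y)) by apply Rabs_pos.
  assert (Rabs (clamp x - clamp y) <= Rabs (x - y))
    by (unfold clamp, Rmax, Rmin, Rabs; repeat destruct Rle_dec; repeat destruct Rcase_abs; lra).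
  assert (0 <= Rabs L) by apply Rabs_pos.
  nra.
Qed.

Lemma norm_RInt_minus_const_le a b (g : R -> X) (v : X) M :
  a <= b -> ex_RInt g a b -> (forall x, a <= x <= b -> norm (minus (g x) v) <= M) ->
  norm (minus (RInt g a b) (scal (b - a) v)) <= (b - a) * M.
Proof.
  intros Hab Hg HM.
  rewrite <- RInt_const, <- RInt_minus by (try apply ex_RInt_const; exact Hg).
  apply (norm_RInt_le_const (fun x => minus (g x) v) a b); [exact Hab|exact HM|].
  apply RInt_correct, ex_RInt_minus; [exact Hg|apply ex_RInt_const].
Qed.

Lemma right_rectangle_error a b L (g : R -> X) :
  a <= b -> 0 <= L -> lipschitz_on a b L g ->
  norm (minus (RInt g a b) (scal (b - a) (g b))) <= L * (b - a) ^ 2.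
Proof.
  intros Hab HL Hg. replace (L * (b - a) ^ 2) with ((b - a) * (L * (b - a))) by ring.
  apply norm_RInt_minus_const_le; [exact Hab|now apply (ex_RInt_lipschitz_on a b L)|].
  intros x Hx. eapply Rle_trans; [apply Hg; lra|].
  rewrite Rabs_left1 by lra. nra.
Qed.

Lemma trapezoid_error_lipschitz a b L (g : R -> X) :
  a <= b -> 0 <= L -> lipschitz_on a b L g ->
  norm (minus (RInt g a b) (scal ((b - a) / 2) (plus (g a) (g b)))) <= L * (b - a) ^ 2.
Proof.
  intros Hab HL Hg. replace (L * (b - a) ^ 2) with ((b - a) * (L * (b - a))) by ring.
  replace (scal ((b - a) / 2) (plus (g a) (g b)))
    with (scal (b - a) (scal (1 / 2) (plus (g a) (g b)))) by module_eq.
  apply norm_RInt_minus_const_le; [exact Hab|now apply (ex_RInt_lipschitz_on a b L)|].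
  intros x Hx.
  norm_as (plus (scal (1 / 2) (minus (g x) (g a))) (scal (1 / 2) (minus (g x) (g b)))).
  eapply Rle_trans; [apply (norm_plus_le (X := X))|].
  eapply Rle_trans; [apply Rplus_le_compat; apply (norm_scal_nonneg (X := X)); lra|].
  assert (Ha : norm (minus (g x) (g a)) <= L * (x - a))
    by (rewrite <- (Rabs_pos_eq (x - a)) by lra; apply Hg; lra).
  assert (Hb : norm (minus (g x) (g b)) <= L * (b - x))
    by (rewrite <- (Rabs_pos_eq (b - x)), <- (Rabs_minus_sym x b) by lra; apply Hg; lra).
  nra.
Qed.

Lemma RInt_reflect a b (g : R -> X) :
  ex_RInt g a b ->
  ex_RInt (fun y => g (a + b - y)) a b /\ RInt (fun y => g (a + b - y)) a b = RInt g a b.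
Proof.
  intros Hg.
  assert (Hg' : ex_RInt g (-1 * a + (a + b)) (-1 * b + (a + b))).
  { replace (-1 * a + (a + b)) with b by ring. replace (-1 * b + (a + b)) with a by ring.
    now apply ex_RInt_swap. }
  assert (Hext : forall y, g (a + b - y) = scal (-1) (scal (-1) (g (-1 * y + (a + b))))).
  { intros y. replace (a + b - y) with (-1 * y + (a + b)) by ring. module_eq. }
  assert (Hex := ex_RInt_scal _ a b (-1) (ex_RInt_comp_lin g (-1) (a + b) a b Hg')).
  split.
  - eapply ex_RInt_ext; [|exact Hex]. intros y _. now rewrite Hext.
  - rewrite (RInt_ext _ _ a b (fun y _ => Hext y)), RInt_scal, RInt_comp_lin
      by (exact Hg' || exact (ex_RInt_comp_lin g (-1) (a + b) a b Hg')).
    replace (-1 * a + (a + b)) with b by ring. replace (-1 * b + (a + b)) with a by ring.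
    rewrite <- (opp_RInt_swap g a b Hg). module_eq.
Qed.

(* Adding the reflected integrand [g (a + b - s)] makes the first-order Taylor
   terms at [a] and at [b] cancel up to [(s - a) (g' a - g' b)]. *)
Lemma trapezoid_error_taylor a b M (g g' : R -> X) :
  a <= b -> 0 <= M -> ex_RInt g a b ->
  (forall c s, a <= c <= b -> a <= s <= b ->
     norm (minus (minus (g s) (g c)) (scal (s - c) (g' c))) <= M * (s - c) ^ 2) ->
  norm (minus (g' a) (g' b)) <= M * (b - a) ->
  norm (minus (RInt g a b) (scal ((b - a) / 2) (plus (g a) (g b)))) <= 3 / 2 * M * (b - a) ^ 3.
Proof.
  intros Hab HM Hg Htaylor Hg'.
  destruct (RInt_reflect a b g Hg) as [Hrefl_ex Hrefl].
  assert (Hh : norm (minus (RInt (fun s => plus (g s) (g (a + b - s))) a b)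
                           (scal (b - a) (plus (g a) (g b))))
               <= (b - a) * (3 * M * (b - a) ^ 2)).
  { apply norm_RInt_minus_const_le;
      [exact Hab|exact (ex_RInt_plus g (fun s => g (a + b - s)) a b Hg Hrefl_ex)|].
    intros s Hs.
    norm_as (plus (plus (minus (minus (g s) (g a)) (scal (s - a) (g' a)))
                        (minus (minus (g (a + b - s)) (g b)) (scal (a + b - s - b) (g' b))))
                  (scal (s - a) (minus (g' a) (g' b)))).
    eapply Rle_trans; [apply (norm_plus_le (X := X))|].
    eapply Rle_trans; [apply Rplus_le_compat;
      [apply (norm_plus_le (X := X))|apply (norm_scal_nonneg (X := X)); lra]|].
    assert (Ha := Htaylor a s ltac:(lra) Hs).
    assert (Hb := Htaylor b (a + b - s) ltac:(lra) ltac:(lra)).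
    replace ((a + b - s - b) ^ 2) with ((s - a) ^ 2) in Hb by ring.
    assert (Hsq : M * (s - a) ^ 2 <= M * (b - a) ^ 2)
      by (apply Rmult_le_compat_l; [exact HM|apply pow_incr; lra]).
    assert (Hlin : (s - a) * norm (minus (g' a) (g' b)) <= (b - a) * (M * (b - a)))
      by (apply Rmult_le_compat; [lra|apply norm_ge_0|lra|exact Hg']).
    replace (3 * M * (b - a) ^ 2) with
      (M * (b - a) ^ 2 + M * (b - a) ^ 2 + (b - a) * (M * (b - a))) by ring.
    lra. }
  assert (Hsum : RInt (fun s => plus (g s) (g (a + b - s))) a b = plus (RInt g a b) (RInt g a b)).
  { rewrite <- Hrefl at 2. exact (RInt_plus g (fun s => g (a + b - s)) a b Hg Hrefl_ex). }
  rewrite Hsum in Hh.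
  norm_as (scal (1 / 2) (minus (plus (RInt g a b) (RInt g a b))
                               (scal (b - a) (plus (g a) (g b))))).
  eapply Rle_trans; [apply (norm_scal_nonneg (X := X)); lra|].
  replace (3 / 2 * M * (b - a) ^ 3) with (1 / 2 * ((b - a) * (3 * M * (b - a) ^ 2))) by field.
  apply Rmult_le_compat_l; [lra|exact Hh].
Qed.
End Quadrature.

Lemma cq_weight_bdf1 dt j : cq_weight 1 dt j = dt.
Proof.
  induction j as [|j IH]; simpl; unfold bdf_delta; [field|].
  rewrite IH. destruct j; field.
Qed.

Lemma cq_weight_bdf2_0 dt : cq_weight 2 dt 0 = 2 * dt / 3.
Proof. simpl. unfold bdf_delta. field. Qed.

Lemma cq_weight_bdf2_S dt j : cq_weight 2 dt (S j) = 2 * dt / 3 + / 3 * cq_weight 2 dt j.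
Proof.
  induction j as [|j IH].
  - simpl. unfold bdf_delta. field.
  - change (cq_weight 2 dt (S (S j))) with
      (- (bdf_delta 2 1 * cq_weight 2 dt (S j) + bdf_delta 2 2 * cq_weight 2 dt j)
         / bdf_delta 2 0).
    rewrite IH. unfold bdf_delta. field.
Qed.

Lemma cq_weight_bounds p dt j : (p = 1%nat \/ p = 2%nat) -> 0 <= dt ->
  0 <= cq_weight p dt j <= dt.
Proof.
  intros [-> | ->] Hdt.
  - rewrite cq_weight_bdf1. lra.
  - induction j as [|j IH]; [rewrite cq_weight_bdf2_0|rewrite cq_weight_bdf2_S]; lra.
Qed.

Lemma contraction_bound (e : nat -> R) c n : e 0%nat <= 0 -> 0 <= c ->
  (forall m, (m < n)%nat -> e (S m) <= / 3 * e m + c) ->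
  e n <= Rmin (INR n) (3 / 2) * c.
Proof.
  intros H0 Hc HS.
  assert (Hboth : forall m, (m <= n)%nat -> e m <= INR m * c /\ e m <= 3 / 2 * c).
  { induction m as [|m IH]; intros Hm; [simpl; lra|].
    destruct (IH ltac:(lia)) as [IH1 IH2]. specialize (HS m ltac:(lia)).
    rewrite S_INR. assert (0 <= INR m) by apply pos_INR.
    split; [destruct (Rle_lt_dec 0 (e m)); nra|lra]. }
  destruct (Hboth n (le_n n)). unfold Rmin. destruct Rle_dec; lra.
Qed.

Lemma grid_bounds m n dt : 0 < dt -> (m <= n)%nat -> 0 <= INR m * dt <= INR n * dt.
Proof.
  intros Hdt Hm. assert (0 <= INR m) by apply pos_INR.
  assert (INR m <= INR n) by (apply le_INR; lia). split; nra.
Qed.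

Lemma grid_step m dt : INR (S m) * dt - INR m * dt = dt.
Proof. rewrite S_INR. ring. Qed.

Section ConvolutionQuadrature.
Context {X : NormedModule R_AbsRing}.

Lemma cq_inv_0 p dt (g : R -> X) : cq_inv p dt g 0 = scal (cq_weight p dt 0) (g 0).
Proof. unfold cq_inv. rewrite sum_O. simpl. now rewrite Rmult_0_l. Qed.

Lemma cq_inv_S p dt (g : R -> X) n : cq_inv p dt g (S n) =
  plus (scal (cq_weight p dt 0) (g (INR (S n) * dt)))
    (sum_n (fun j => scal (cq_weight p dt (S j)) (g (INR (n - j) * dt))) n).
Proof.
  unfold cq_inv, sum_n. rewrite sum_Sn_m by lia. f_equal.
  rewrite <- sum_n_m_S. reflexivity.
Qed.

Lemma cq_inv_bdf1_S dt (g : R -> X) n :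
  cq_inv 1 dt g (S n) = plus (scal dt (g (INR (S n) * dt))) (cq_inv 1 dt g n).
Proof.
  rewrite cq_inv_S, cq_weight_bdf1. f_equal.
  apply sum_n_ext. intros j. now rewrite !cq_weight_bdf1.
Qed.

Lemma cq_inv_bdf2_S dt (g : R -> X) n : cq_inv 2 dt g (S n) =
  plus (scal (2 * dt / 3) (g (INR (S n) * dt)))
    (plus (scal (2 / 3) (cq_inv 1 dt g n)) (scal (/ 3) (cq_inv 2 dt g n))).
Proof.
  rewrite cq_inv_S, cq_weight_bdf2_0. f_equal. unfold cq_inv.
  rewrite <- !sum_n_scal_l, <- sum_n_plus. apply sum_n_ext. intros j.
  rewrite cq_weight_bdf2_S, cq_weight_bdf1. module_eq.
Qed.

Lemma cq_inv_minus p dt (f g : R -> X) n :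
  cq_inv p dt (fun t => minus (f t) (g t)) n = minus (cq_inv p dt f n) (cq_inv p dt g n).
Proof.
  unfold cq_inv.
  rewrite (sum_n_ext _ (fun j => plus (scal (cq_weight p dt j) (f (INR (n - j) * dt)))
                          (scal (-1) (scal (cq_weight p dt j) (g (INR (n - j) * dt))))))
    by (intros j; module_eq).
  rewrite sum_n_plus, sum_n_scal_l. module_eq.
Qed.

(* The term [j = n] samples [g 0 = 0], so only [n] weights, each at most [dt], contribute. *)
Lemma norm_cq_inv_le p dt (g : R -> X) n M : (p = 1%nat \/ p = 2%nat) -> 0 < dt ->
  g 0 = zero -> (forall m, (m <= n)%nat -> norm (g (INR m * dt)) <= M) ->
  norm (cq_inv p dt g n) <= INR n * dt * M.
Proof.
  intros Hp Hdt Hg0 HM.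
  assert (HM0 : 0 <= M) by (eapply Rle_trans; [apply (norm_ge_0 (g (INR 0 * dt)))|apply (HM 0%nat); lia]).
  destruct n as [|n].
  { rewrite cq_inv_0, Hg0. norm_as (@zero X). rewrite norm_zero. simpl. lra. }
  unfold cq_inv.
  rewrite sum_Sn, Nat.sub_diag, Rmult_0_l, Hg0.
  eapply Rle_trans; [apply norm_plus_le|].
  eapply Rle_trans; [apply Rplus_le_compat_l, norm_scal_le|].
  rewrite norm_zero, Rmult_0_r, Rplus_0_r.
  eapply Rle_trans; [exact (norm_sum_n_m _ 0 n)|].
  eapply Rle_trans with (sum_n (fun _ => dt * M) n).
  - apply sum_n_m_le. intros j.
    destruct (cq_weight_bounds p dt j Hp ltac:(lra)).
    eapply Rle_trans; [apply norm_scal_nonneg; lra|].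
    assert (norm (g (INR (S n - j) * dt)) <= M) by (apply HM; lia).
    assert (0 <= norm (g (INR (S n - j) * dt))) by apply norm_ge_0.
    nra.
  - rewrite sum_n_const. lra.
Qed.

Lemma cq_inv_stability p dt (f ft : R -> X) n M : (p = 1%nat \/ p = 2%nat) -> 0 < dt ->
  f 0 = zero -> ft 0 = zero ->
  (forall tau, 0 <= tau <= INR n * dt -> norm (minus (f tau) (ft tau)) <= M) ->
  norm (minus (cq_inv p dt f n) (cq_inv p dt ft n)) <= INR n * dt * M.
Proof.
  intros Hp Hdt Hf0 Hft0 HM. rewrite <- cq_inv_minus.
  apply norm_cq_inv_le; [exact Hp|exact Hdt| |].
  - rewrite Hf0, Hft0. module_eq.
  - intros m Hm. apply HM, grid_bounds; assumption.
Qed.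
End ConvolutionQuadrature.

Section Consistency.
Context {X : CompleteNormedModule R_AbsRing}.
Variables (dt L : R) (n : nat) (g : R -> X).
Hypotheses (Hdt : 0 < dt) (HL : 0 <= L) (Hg : lipschitz_on 0 (INR n * dt) L g) (Hg0 : g 0 = zero).

Lemma RInt_grid_S m : (m < n)%nat ->
  RInt g 0 (INR (S m) * dt) = plus (RInt g 0 (INR m * dt)) (RInt g (INR m * dt) (INR (S m) * dt)).
Proof.
  intros Hm. destruct (grid_bounds m n dt Hdt ltac:(lia)).
  destruct (grid_bounds (S m) n dt Hdt ltac:(lia)).
  assert (INR m * dt <= INR (S m) * dt) by (rewrite S_INR; lra).
  symmetry. apply RInt_Chasles; eapply ex_RInt_lipschitz_on; try eapply lipschitz_on_sub;
    try exact Hg; lra.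
Qed.

Lemma bdf1_consistency :
  norm (minus (RInt g 0 (INR n * dt)) (cq_inv 1 dt g n)) <= INR n * (L * dt ^ 2).
Proof.
  enough (H : forall m, (m <= n)%nat ->
    norm (minus (RInt g 0 (INR m * dt)) (cq_inv 1 dt g m)) <= INR m * (L * dt ^ 2)) by auto.
  induction m as [|m IH]; intros Hm.
  - rewrite cq_inv_0, Hg0. simpl. rewrite Rmult_0_l, RInt_point.
    apply norm_le_of_eq_zero; [module_eq|lra].
  - rewrite RInt_grid_S, cq_inv_bdf1_S by lia.
    norm_as (plus (minus (RInt g 0 (INR m * dt)) (cq_inv 1 dt g m))
                  (minus (RInt g (INR m * dt) (INR (S m) * dt))
                         (scal dt (g (INR (S m) * dt))))).
    eapply Rle_trans; [apply (norm_plus_le (X := X))|].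
    destruct (grid_bounds m n dt Hdt ltac:(lia)). destruct (grid_bounds (S m) n dt Hdt Hm).
    assert (Hstep := right_rectangle_error (INR m * dt) (INR (S m) * dt) L g
      ltac:(rewrite S_INR; lra) HL ltac:(eapply lipschitz_on_sub; [| |exact Hg]; lra)).
    rewrite grid_step in Hstep.
    eapply Rle_trans; [apply Rplus_le_compat; [exact (IH ltac:(lia))|exact Hstep]|].
    rewrite S_INR. lra.
Qed.

(* The BDF2 error splits as [Z n + W n]: [Z] is the error of the composite trapezoidal
   rule (which starts with weight [dt / 2] at [g 0 = 0]), and the discrepancy [W]
   between BDF2 and the trapezoidal rule satisfies
   [W (m + 1) = W m / 3 + dt / 6 (g t_m - g t_(m+1))]. *)
Lemma bdf2_consistency eZ eD : 0 <= eZ -> 0 <= eD ->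
  (forall m, (m < n)%nat ->
     norm (minus (RInt g (INR m * dt) (INR (S m) * dt))
                 (scal (dt / 2) (plus (g (INR m * dt)) (g (INR (S m) * dt))))) <= eZ) ->
  (forall m, (m < n)%nat -> norm (minus (g (INR m * dt)) (g (INR (S m) * dt))) <= eD) ->
  norm (minus (RInt g 0 (INR n * dt)) (cq_inv 2 dt g n))
    <= INR n * eZ + Rmin (INR n) (3 / 2) * (dt / 6 * eD).
Proof.
  intros HeZ HeD Htrap Hdiff.
  pose (Z := fun m => plus (minus (RInt g 0 (INR m * dt)) (cq_inv 1 dt g m))
                           (scal (dt / 2) (g (INR m * dt)))).
  pose (W := fun m => minus (minus (cq_inv 1 dt g m) (cq_inv 2 dt g m))
                            (scal (dt / 2) (g (INR m * dt)))).
  assert (HZ : forall m, (m <= n)%nat -> norm (Z m) <= INR m * eZ).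
  { induction m as [|m IH]; intros Hm; unfold Z.
    - rewrite cq_inv_0. simpl. rewrite Rmult_0_l, RInt_point, Hg0.
      apply norm_le_of_eq_zero; [module_eq|lra].
    - rewrite RInt_grid_S, cq_inv_bdf1_S by lia.
      norm_as (plus (Z m) (minus (RInt g (INR m * dt) (INR (S m) * dt))
                 (scal (dt / 2) (plus (g (INR m * dt)) (g (INR (S m) * dt)))))).
      eapply Rle_trans; [apply (norm_plus_le (X := X))|].
      eapply Rle_trans; [apply Rplus_le_compat; [exact (IH ltac:(lia))|exact (Htrap m Hm)]|].
      rewrite S_INR. lra. }
  assert (HW : norm (W n) <= Rmin (INR n) (3 / 2) * (dt / 6 * eD)).
  { apply (contraction_bound (fun m => norm (W m))).
    - unfold W. rewrite !cq_inv_0. simpl. rewrite Rmult_0_l, Hg0.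
      apply norm_le_of_eq_zero; [module_eq|lra].
    - apply Rmult_le_pos; lra.
    - intros m Hm. unfold W. rewrite cq_inv_bdf1_S, cq_inv_bdf2_S.
      norm_as (plus (scal (/ 3) (W m))
                    (scal (dt / 6) (minus (g (INR m * dt)) (g (INR (S m) * dt))))).
      eapply Rle_trans; [apply (norm_plus_le (X := X))|].
      apply Rplus_le_compat; [apply (norm_scal_nonneg (X := X)); lra|].
      eapply Rle_trans; [apply (norm_scal_nonneg (X := X)); lra|].
      apply Rmult_le_compat_l; [lra|exact (Hdiff m Hm)]. }
  norm_as (plus (Z n) (W n)).
  eapply Rle_trans; [apply (norm_plus_le (X := X))|].
  apply Rplus_le_compat; [exact (HZ n (le_n n))|exact HW].
Qed.
End Consistency.

Section BdfErrors.
Context {X : CompleteNormedModule R_AbsRing}.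
Variables (T dt : R) (n : nat) (f f' : R -> X) (M : R).
Hypotheses (Hdt : 0 < dt) (HnT : INR n * dt <= T) (Hf0 : f 0 = zero)
  (Hf : forall u, 0 <= u <= INR n * dt -> deriv_within_0T T f f' u).

Let horizon_nonneg : 0 <= INR n * dt.
Proof. apply (grid_bounds n n dt Hdt (le_n n)). Qed.

Section FirstDerivativeBounded.
Hypothesis HM : forall u, 0 <= u <= INR n * dt -> norm (f' u) <= M.

Let M_nonneg : 0 <= M.
Proof.
  eapply Rle_trans; [apply (norm_ge_0 (f' 0))|apply HM; pose proof horizon_nonneg; lra].
Qed.

Let f_lipschitz : lipschitz_on 0 (INR n * dt) M f.
Proof. apply (lipschitz_on_of_deriv_bound T f f'); auto; lra. Qed.

Lemma bdf1_error_order1 :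
  norm (minus (RInt f 0 (INR n * dt)) (cq_inv 1 dt f n)) <= INR n * dt * dt ^ 1 * M.
Proof.
  eapply Rle_trans; [exact (bdf1_consistency dt M n f Hdt M_nonneg f_lipschitz Hf0)|].
  right. ring.
Qed.

Lemma bdf2_error_order1 :
  norm (minus (RInt f 0 (INR n * dt)) (cq_inv 2 dt f n)) <= 7 / 6 * (INR n * dt * dt ^ 1 * M).
Proof.
  assert (Hgrid : forall m, (m < n)%nat ->
            0 <= INR m * dt <= INR n * dt /\ 0 <= INR (S m) * dt <= INR n * dt)
    by (intros m Hm; split; apply grid_bounds; auto; lia).
  eapply Rle_trans.
  { apply (bdf2_consistency dt M n f Hdt f_lipschitz Hf0 (M * dt ^ 2) (M * dt)).
    - apply Rmult_le_pos; [exact M_nonneg|apply pow_le; lra].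
    - apply Rmult_le_pos; lra.
    - intros m Hm. destruct (Hgrid m Hm).
      pose proof (trapezoid_error_lipschitz (INR m * dt) (INR (S m) * dt) M f
        ltac:(rewrite S_INR; lra) M_nonneg
        ltac:(eapply lipschitz_on_sub; [| |exact f_lipschitz]; lra)) as Htrap.
      now rewrite grid_step in Htrap.
    - intros m Hm. destruct (Hgrid m Hm).
      eapply Rle_trans; [apply f_lipschitz; assumption|].
      rewrite <- Rabs_Ropp, Ropp_minus_distr, grid_step, Rabs_pos_eq; lra. }
  assert (Rmin (INR n) (3 / 2) <= INR n) by apply Rmin_l.
  assert (0 <= dt / 6 * (M * dt)) by (apply Rmult_le_pos; [lra|apply Rmult_le_pos; lra]).
  assert (Rmin (INR n) (3 / 2) * (dt / 6 * (M * dt)) <= INR n * (dt / 6 * (M * dt)))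
    by (apply Rmult_le_compat_r; assumption).
  lra.
Qed.
End FirstDerivativeBounded.

Section SecondDerivativeBounded.
Variable f'' : R -> X.
Hypotheses (Hf'0 : f' 0 = zero)
  (Hf' : forall u, 0 <= u <= INR n * dt -> deriv_within_0T T f' f'' u)
  (HM : forall u, 0 <= u <= INR n * dt -> norm (f'' u) <= M).

Lemma bdf2_error_order2 :
  norm (minus (RInt f 0 (INR n * dt)) (cq_inv 2 dt f n)) <= 7 / 4 * (INR n * dt * dt ^ 2 * M).
Proof.
  pose proof horizon_nonneg as Ht.
  set (t := INR n * dt) in *.
  assert (M_nonneg : 0 <= M) by (eapply Rle_trans; [apply (norm_ge_0 (f'' 0))|apply HM; lra]).
  assert (f'_lipschitz : lipschitz_on 0 t M f')
    by (apply (lipschitz_on_of_deriv_bound T f' f''); auto; lra).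
  assert (f'_bound : forall u, 0 <= u <= t -> norm (f' u) <= M * t).
  { intros u Hu.
    assert (E : f' u = minus (f' u) (f' 0)) by (rewrite Hf'0; module_eq). rewrite E.
    eapply Rle_trans; [apply f'_lipschitz; lra|].
    apply Rmult_le_compat_l; [exact M_nonneg|]. rewrite Rminus_0_r, Rabs_pos_eq; lra. }
  assert (f_lipschitz : lipschitz_on 0 t (M * t) f)
    by (apply (lipschitz_on_of_deriv_bound T f f'); auto; lra).
  assert (Htaylor := taylor1_remainder T f f' 0 t M ltac:(lra) HnT M_nonneg Hf f'_lipschitz).
  assert (Hgrid : forall m, (m < n)%nat ->
            0 <= INR m * dt <= t /\ 0 <= INR (S m) * dt <= t)
    by (intros m Hm; split; apply grid_bounds; auto; lia).
  eapply Rle_trans.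
  { apply (bdf2_consistency dt (M * t) n f Hdt f_lipschitz Hf0
             (3 / 2 * M * dt ^ 3) (M * t * dt)).
    - apply Rmult_le_pos; [lra|apply pow_le; lra].
    - apply Rmult_le_pos; [apply Rmult_le_pos|]; lra.
    - intros m Hm. destruct (Hgrid m Hm).
      assert (Hstep : INR m * dt <= INR (S m) * dt) by (rewrite S_INR; lra).
      pose proof (trapezoid_error_taylor (INR m * dt) (INR (S m) * dt) M f f' Hstep M_nonneg
        (ex_RInt_lipschitz_on _ _ (M * t) f Hstep
           ltac:(eapply lipschitz_on_sub; [| |exact f_lipschitz]; lra))
        ltac:(intros c s Hc Hs; apply Htaylor; lra)
        ltac:(eapply Rle_trans; [apply f'_lipschitz; lra|];
              rewrite <- Rabs_Ropp, Ropp_minus_distr, Rabs_pos_eq; lra)) as Htrap.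
      now rewrite grid_step in Htrap.
    - intros m Hm. destruct (Hgrid m Hm).
      eapply Rle_trans; [apply f_lipschitz; assumption|].
      rewrite <- Rabs_Ropp, Ropp_minus_distr, grid_step, Rabs_pos_eq; lra. }
  assert (Rmin (INR n) (3 / 2) <= 3 / 2) by apply Rmin_r.
  assert (0 <= dt / 6 * (M * t * dt))
    by (apply Rmult_le_pos; [lra|apply Rmult_le_pos; [apply Rmult_le_pos|]; lra]).
  assert (Rmin (INR n) (3 / 2) * (dt / 6 * (M * t * dt)) <= 3 / 2 * (dt / 6 * (M * t * dt)))
    by (apply Rmult_le_compat_r; assumption).
  unfold t in *. simpl. lra.
Qed.
End SecondDerivativeBounded.
End BdfErrors.

Lemma bdf_consistency_error {X : CompleteNormedModule R_AbsRing} T p r dt (f : R -> X) d n M :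
  (p = 1%nat \/ p = 2%nat) -> (1 <= r <= p)%nat -> 0 < dt -> INR n * dt <= T ->
  Cr_0T T r f d -> (forall k, (k < r)%nat -> d k 0 = zero) ->
  (forall tau, 0 <= tau <= INR n * dt -> norm (d r tau) <= M) ->
  norm (minus (RInt f 0 (INR n * dt)) (cq_inv p dt f n)) <= 2 * (INR n * dt * dt ^ r * M).
Proof.
  intros Hp Hr Hdt HnT [Hd0 [Hderiv _]] Hinit HM.
  assert (Ef : d 0%nat = f) by (apply functional_extensionality; exact Hd0). subst f.
  assert (Hd : forall k, (k < r)%nat -> forall u, 0 <= u <= INR n * dt ->
                 deriv_within_0T T (d k) (d (S k)) u)
    by (intros k Hk u Hu; apply Hderiv; lra || assumption).
  destruct (grid_bounds n n dt Hdt (le_n n)).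
  assert (0 <= INR n * dt * dt ^ r * M).
  { apply Rmult_le_pos; [apply Rmult_le_pos; [lra|apply pow_le; lra]|].
    eapply Rle_trans; [apply (norm_ge_0 (d r 0))|apply HM; lra]. }
  destruct Hp as [-> | ->]; [|destruct (Nat.eq_dec r 1) as [->|Hr2]].
  - replace r with 1%nat in * by lia.
    eapply Rle_trans; [apply (bdf1_error_order1 T dt n _ (d 1%nat)); auto; lia|lra].
  - eapply Rle_trans; [apply (bdf2_error_order1 T dt n _ (d 1%nat)); auto; lia|lra].
  - replace r with 2%nat in * by lia.
    eapply Rle_trans; [apply (bdf2_error_order2 T dt n _ (d 1%nat) M) with (f'' := d 2%nat);
                       auto; lia|lra].
Qed.

Theorem lemma6p1 :
  forall (X : CompleteNormedModule R_AbsRing) (T : R) (p r : nat),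
    0 < T -> (p = 1%nat \/ p = 2%nat) -> (1 <= r <= p)%nat ->
    exists C : R,
      forall (dt : R) (f ft : R -> X) (d : nat -> R -> X) (n : nat),
        0 < dt ->
        Cr_0T T r f d ->
        (forall t, 0 <= t <= T -> cont_within_0T T ft t) ->
        (forall k, (k < r)%nat -> d k 0 = zero) ->
        ft 0 = zero ->
        INR n * dt <= T ->
        forall M1 M2 : R,
          (forall tau, 0 <= tau <= INR n * dt -> norm (d r tau) <= M1) ->
          (forall tau, 0 <= tau <= INR n * dt -> norm (minus (f tau) (ft tau)) <= M2) ->
          norm (minus (RInt f 0 (INR n * dt)) (cq_inv p dt ft n))
            <= C * (INR n * dt) * (dt ^ r * M1 + M2).
Proof.
  intros X T p r _ Hp Hr. exists 2.
  (* Only the grid values of [ft] enter, so its continuity is not needed. *)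
  intros dt f ft d n Hdt HCr _ Hinit Hft0 HnT M1 M2 HM1 HM2.
  assert (Hf0 : f 0 = zero) by (destruct HCr as [Hd0 _]; rewrite <- Hd0; apply Hinit; lia).
  assert (Hconsistency := bdf_consistency_error T p r dt f d n M1 Hp Hr Hdt HnT HCr Hinit HM1).
  assert (Hstability := cq_inv_stability p dt f ft n M2 Hp Hdt Hf0 Hft0 HM2).
  destruct (grid_bounds n n dt Hdt (le_n n)).
  assert (0 <= M2)
    by (eapply Rle_trans; [apply (norm_ge_0 (minus (f 0) (ft 0)))|apply HM2; lra]).
  norm_as (plus (minus (RInt f 0 (INR n * dt)) (cq_inv p dt f n))
                (minus (cq_inv p dt f n) (cq_inv p dt ft n))).
  eapply Rle_trans; [apply (norm_plus_le (X := X))|].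
  eapply Rle_trans; [apply Rplus_le_compat; [exact Hconsistency|exact Hstability]|].
  assert (0 <= INR n * dt * M2) by (apply Rmult_le_pos; lra).
  lra.
Qed.
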